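(* Let $K\ge L\ge T\ge 2$ be integers and let $(q,\boldsymbol{\alpha}^{(p)},\boldsymbol{\alpha}^{(s)},\boldsymbol{\beta}^{(p)},\boldsymbol{\beta}^{(s)})$ be the tuple $\mathrm{CAT}_x(K,L,T)$ described in the context, for any positive integer $x$ coprime to $q$. Then this tuple is a cyclic-addition degree table (CAT) for parameters $K,L,T$ with number of unique entries $$N=(K+1)(L+1)+(T-1)^2+\kappa+\lambda .$$
   Context: Construction $\mathrm{CAT}_x$: Let $K\ge L\ge T\ge 2$ be integers. Let $\kappa,\lambda$ be the smallest non-negative integers such that $K+1+\kappa$ and $L+1+\lambda$ are coprime to $T-1$. Put $K^\star=K+1+\kappa$, $L^\star=L+1+\lambda$, $\bar T=T-1$ and $q=K^\star L^\star+\bar T^2$. Let $x$ be a positive integer coprime to $q$ and let $y\in\{0,\dots,q-1\}$ be the (unique) integer with $x\bar T+yK^\star\equiv 0\pmod q$. Define vectors over $\mathbb{Z}_q$ (integers mod $q$): $\boldsymbol{\alpha}^{(p)}=(0,y,2y,\dots,(K-1)y)\bmod q\in\mathbb{Z}_q^K$, $\boldsymbol{\alpha}^{(s)}=(Ky,\;Ky+x,\;\dots,\;Ky+(T-1)x)\bmod q\in\mathbb{Z}_q^T$, $\boldsymbol{\beta}^{(p)}=(0,x,2x,\dots,(L-1)x)\bmod q\in\mathbb{Z}_q^L$, $\boldsymbol{\beta}^{(s)}=(-x,\;y-x,\;\dots,\;(T-1)y-x)\bmod q\in\mathbb{Z}_q^T$. Definition (CAT). For a positive integer $q$ and vectors $\boldsymbol{\alpha}^{(p)}\in\mathbb{Z}_q^K,\boldsymbol{\alpha}^{(s)}\in\mathbb{Z}_q^T,\boldsymbol{\beta}^{(p)}\in\mathbb{Z}_q^L,\boldsymbol{\beta}^{(s)}\in\mathbb{Z}_q^T$,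 write $\{\mathbf v\}$ for the set of entries of a vector $\mathbf v$ and let (all additions in $\mathbb{Z}_q$) $\mathcal{TL}=\{\boldsymbol{\alpha}^{(p)}\}+\{\boldsymbol{\beta}^{(p)}\}$, $\mathcal{TR}=\{\boldsymbol{\alpha}^{(p)}\}+\{\boldsymbol{\beta}^{(s)}\}$, $\mathcal{BL}=\{\boldsymbol{\alpha}^{(s)}\}+\{\boldsymbol{\beta}^{(p)}\}$, $\mathcal{BR}=\{\boldsymbol{\alpha}^{(s)}\}+\{\boldsymbol{\beta}^{(s)}\}$ (sumsets $\mathcal A+\mathcal B=\{a+b: a\in\mathcal A,b\in\mathcal B\}$), and let $\boldsymbol\gamma$ be the vector listing the elements of $\mathcal{TL}\cup\mathcal{TR}\cup\mathcal{BL}\cup\mathcal{BR}$ in ascending order (identifying $\mathbb{Z}_q$ with $\{0,\dots,q-1\}$). For a vector $\boldsymbol\rho$ of length $n$ of $q$-th roots of unity in a field and a vector $\boldsymbol\delta$ of length $m$ with entries in $\mathbb{Z}_q$, $\mathbf V(\boldsymbol\rho,\boldsymbol\delta)$ is the $n\times m$ matrix with $(i,j)$ entry $\rho_i^{\delta_j}$. The tuple $(q,\boldsymbol{\alpha}^{(p)},\boldsymbol{\alpha}^{(s)},\boldsymbol{\beta}^{(p)},\boldsymbol{\beta}^{(s)})$ is a cyclic-addition degree table for parameters $K,L,T$ with $N$ unique entries if: (I) $|\mathcal{TL}\cup\mathcal{TR}\cup\mathcal{BL}\cup\mathcal{BR}|=N$; (II) $|\mathcal{TL}|=KL$; (III)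 $\mathcal{TL}\cap\mathcal{TR}=\mathcal{TL}\cap\mathcal{BL}=\mathcal{TL}\cap\mathcal{BR}=\emptyset$; (IV) in every prime field $\mathbb{F}_p$ with $q\mid p-1$ there exist $N$ $q$-th roots of unity $\boldsymbol\rho=(\rho_1,\dots,\rho_N)$ such that (a) $\mathbf V(\boldsymbol\rho,\boldsymbol\gamma)$ is invertible and (b) all $T\times T$ submatrices of $\mathbf V(\boldsymbol\rho,\boldsymbol{\alpha}^{(s)})$ and of $\mathbf V(\boldsymbol\rho,\boldsymbol{\beta}^{(s)})$ are invertible. *)

From HB Require Import structures.
From mathcomp Require Import all_boot all_order all_algebra.
Set Implicit Arguments. Unset Strict Implicit. Unset Printing Implicit Defensive.
Import Order.TTheory GRing.Theory Num.Theory.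

(* Elements of Z_q are represented by natural numbers in {0,...,q-1};
   vectors over Z_q are sequences of such naturals. *)

Definition entries (v : seq nat) : seq nat := undup v.

Definition sumset (q : nat) (A B : seq nat) : seq nat :=
  undup [seq (a + b) %% q | a <- A, b <- B].

Definition TLset q (ap as_ bp bs : seq nat) := sumset q ap bp.
Definition TRset q (ap as_ bp bs : seq nat) := sumset q ap bs.
Definition BLset q (ap as_ bp bs : seq nat) := sumset q as_ bp.
Definition BRset q (ap as_ bp bs : seq nat) := sumset q as_ bs.

Definition unionset q ap as_ bp bs : seq nat :=
  undup (TLset q ap as_ bp bs ++ TRset q ap as_ bp bs
         ++ BLset q ap as_ bp bs ++ BRset q ap as_ bp bs).

Definition gammavec q ap as_ bp bs : seq nat := sort leq (unionset q ap as_ bp bs).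

Definition disjointl (A B : seq nat) : bool := all (fun a => a \notin B) A.

Definition Vmx (F : pzRingType) (n m : nat) (rho : 'I_n -> F) (delta : seq nat)
  : 'M[F]_(n, m) := \matrix_(i < n, j < m) ((rho i) ^+ (nth 0%N delta j))%R.

Definition is_CAT (q : nat) (ap as_ bp bs : seq nat) (K L T N : nat) : Prop :=
  [/\ size ap = K, size as_ = T, size bp = L, size bs = T
    & all (fun a => a < q) (ap ++ as_ ++ bp ++ bs)] /\
  [/\ size (unionset q ap as_ bp bs) = N,
  size (TLset q ap as_ bp bs) = (K * L)%N,
  [&& disjointl (TLset q ap as_ bp bs) (TRset q ap as_ bp bs),
                 disjointl (TLset q ap as_ bp bs) (BLset q ap as_ bp bs) &
                 disjointl (TLset q ap as_ bp bs) (BRset q ap as_ bp bs)]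
  &
    forall p : nat, prime p -> q %| p.-1 ->
      exists rho : 'I_N -> 'F_p,
        [/\ forall i, ((rho i) ^+ q = 1)%R,
            (\det (@Vmx _ N N rho (gammavec q ap as_ bp bs)))%R != 0%R,
            forall f : 'I_T -> 'I_N, injective f ->
              (\det (\matrix_(i < T, j < T) (rho (f i)) ^+ (nth 0%N as_ j)))%R != 0%R
          & forall f : 'I_T -> 'I_N, injective f ->
              (\det (\matrix_(i < T, j < T) (rho (f i)) ^+ (nth 0%N bs j)))%R != 0%R]].

Definition Kstar (K kappa : nat) := (K + 1 + kappa)%N.
Definition Lstar (L lambda : nat) := (L + 1 + lambda)%N.
Definition CATq (K L T kappa lambda : nat) : nat :=
  (Kstar K kappa * Lstar L lambda + (T - 1) ^ 2)%N.

Definition cat_alpha_p (q K y : nat) : seq nat := [seq (i * y) %% q | i <- iota 0 K].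
Definition cat_alpha_s (q K T x y : nat) : seq nat :=
  [seq (K * y + i * x) %% q | i <- iota 0 T].
Definition cat_beta_p (q L x : nat) : seq nat := [seq (i * x) %% q | i <- iota 0 L].
(* (i*y - x) mod q, computed in nat as (i*y + (q - x mod q)) mod q *)
Definition cat_beta_s (q T x y : nat) : seq nat :=
  [seq (i * y + (q - x %% q)) %% q | i <- iota 0 T].

From HB Require Import structures.
From mathcomp Require Import all_boot all_order all_algebra all_solvable all_field.
From mathcomp Require Import zify ring.
Set Implicit Arguments. Unset Strict Implicit. Unset Printing Implicit Defensive.
Import GRing.Theory.

(* Write Ks = K + 1 + kappa, Ls = L + 1 + lambda, t = T - 1, and deg (a, b)
   for the residue of a y + (b - 1) x modulo q.  Since x t + y Ks = 0 (mod q)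
   and q = Ks Ls + t^2, the relations between the values of deg are generated
   by the lattice spanned by (Ks, t) and (-t, Ls), of determinant q.  TL is the
   image under deg of the rectangle [0, K) x [1, L]; after translating some
   points by lattice vectors, TR, BL and BR together are the image of a
   staircase region disjoint from that rectangle.  As kappa and lambda are
   smaller than t, both regions lie in a box too small to contain two points
   differing by a non-zero lattice vector, so deg is injective on them:
   counting points gives (I) and (II), and disjointness gives (III).
   For (IV) take rho_i = w ^ r_i for a primitive q-th root of unity w in F_p.
   The entries of gamma are distinct residues, so some N rows of the q x N
   matrix (w ^ (i gamma_j)) are independent.  The entries of alpha^(s) and
   beta^(s) are arithmetic progressions whose steps x and y are coprime to q,
   so their T x T minors are Vandermonde matrices with rows scaled by units. *)

Lemma least_coprime_shift_lt n t k0 : 0 < t ->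
  (forall k, k < k0 -> ~~ coprime (n + 1 + k) t) -> k0 < t.
Proof.
move=> t_gt0 not_coprime; rewrite ltnNge; apply/negP => le_t_k0.
(* k = (t - 1) n mod t makes n + 1 + k = 1 (mod t). *)
have /negP[] := not_coprime _ (leq_trans (ltn_pmod ((t - 1) * n) t_gt0) le_t_k0).
rewrite -coprime_modl modnDmr (_ : _ + _ = n * t + 1); last by nia.
by rewrite modnMDl coprime_modl coprime1n.
Qed.

Lemma coprime_mulD_sqr a b t : coprime a t -> coprime a (b * a + t ^ 2).
Proof. by move=> coprime_at; rewrite -coprime_modr modnMDl coprime_modr coprime_pexpr. Qed.

Section Lattice.
Local Open Scope ring_scope.
Variables Ks Ls t : int.

Lemma lattice_short_vectors (Ba Bb m n : int) :
  0 <= t -> Ba < Ks + t -> Ba < 2 * Ks -> Bb < Ls + t -> Bb < 2 * Ls ->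
  - Ba <= m * Ks - n * t <= Ba -> - Bb <= m * t + n * Ls <= Bb ->
  (m = 0 /\ n = 0) \/ (m = 1 /\ n = 0) \/ (m = -1 /\ n = 0) \/
  (m = 0 /\ n = 1) \/ (m = 0 /\ n = -1).
Proof.
move=> t_ge0 Ba_lt1 Ba_lt2 Bb_lt1 Bb_lt2 da_le db_le.
have mn0 : m = 0 \/ n = 0 by nia.
have : m = 0 -> n = -1 \/ n = 0 \/ n = 1 by nia.
have : n = 0 -> m = -1 \/ m = 0 \/ m = 1 by nia.
lia.
Qed.

Variables x y q : int.
Hypotheses (qE : q = Ks * Ls + t ^+ 2) (q_neq0 : q != 0).
Hypotheses (q_coprime_x : coprimez q x) (q_coprime_Ks : coprimez q Ks).
Hypothesis q_dvd : (q %| x * t + y * Ks)%Z.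

Lemma lattice_dvd_yt : (q %| y * t - x * Ls)%Z.
Proof.
rewrite -(Gauss_dvdzr _ q_coprime_Ks).
rewrite (_ : Ks * _ = t * (x * t + y * Ks) - x * q); last by rewrite qE; ring.
by rewrite rpredB ?dvdz_mull ?dvdzz.
Qed.

Lemma lattice_coords da db : (q %| da * y + db * x)%Z ->
  exists m n, da = m * Ks - n * t /\ db = m * t + n * Ls.
Proof.
move=> q_dvd_d.
(* Invert the basis matrix, of determinant q: q m = da Ls + db t, q n = db Ks - da t. *)
have /dvdzP[n Dn] : (q %| db * Ks - da * t)%Z.
  rewrite -(Gauss_dvdzr _ q_coprime_x).
  rewrite (_ : x * _ = Ks * (da * y + db * x) - da * (x * t + y * Ks)); last by ring.
  by rewrite rpredB ?dvdz_mull.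
have /dvdzP[m Dm] : (q %| da * Ls + db * t)%Z.
  rewrite -(Gauss_dvdzr _ q_coprime_x).
  rewrite (_ : x * _ = t * (da * y + db * x) - da * (y * t - x * Ls)); last by ring.
  by rewrite rpredB ?dvdz_mull ?lattice_dvd_yt.
exists m, n; split; apply: (mulIf q_neq0).
- rewrite (_ : da * q = Ks * (da * Ls + db * t) - t * (db * Ks - da * t)); last by rewrite qE; ring.
  by rewrite Dm Dn; ring.
- rewrite (_ : db * q = Ls * (db * Ks - da * t) + t * (da * Ls + db * t)); last by rewrite qE; ring.
  by rewrite Dm Dn; ring.
Qed.

End Lattice.

(* Locked: otherwise mem_cat sees [rect K 1 _ _] as a concatenation. *)
Definition rect (a0 na b0 nb : nat) : seq (nat * nat) :=
  locked [seq (a, b) | a <- iota a0 na, b <- iota b0 nb].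

Lemma mem_rect a0 na b0 nb P :
  (P \in rect a0 na b0 nb) = (a0 <= P.1 < a0 + na) && (b0 <= P.2 < b0 + nb).
Proof.
rewrite /rect -lock; case: P => a b; apply/allpairsP/andP => [[[a' b'] /= [? ? [-> ->]]]|[? ?]].
  by rewrite -!mem_iota.
by exists (a, b); rewrite !mem_iota.
Qed.

Lemma size_rect a0 na b0 nb : size (rect a0 na b0 nb) = na * nb.
Proof. by rewrite /rect -lock size_allpairs !size_iota. Qed.

Lemma uniq_rect a0 na b0 nb : uniq (rect a0 na b0 nb).
Proof. by rewrite /rect -lock; apply: allpairs_uniq; rewrite ?iota_uniq // => -[? ?] [? ?]. Qed.

Lemma sumset_mapP q (f g : nat -> nat) (A B : seq nat) z :
  reflect (exists2 i, i \in A & exists2 j, j \in B & z = (f i + g j) %% q)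
          (z \in sumset q (map f A) (map g B)).
Proof.
rewrite /sumset mem_undup.
apply: (iffP allpairsP) => [[[_ _] /= [/mapP[i Ai ->] /mapP[j Bj ->] ->]]|[i Ai [j Bj ->]]].
  by exists i => //; exists j.
by exists (f i, g j); split; rewrite /= ?map_f.
Qed.

Lemma unionset_lt q ap as_ bp bs :
  0 < q -> all (fun z => z < q) (unionset q ap as_ bp bs).
Proof.
move=> q_gt0; apply/allP => z; rewrite mem_undup !mem_cat.
by do 3?case/orP; rewrite mem_undup => /allpairsP[[a b] [_ _ ->]]; rewrite ltn_pmod.
Qed.

Lemma cat_shape q K L T x y : 0 < q ->
  let ap := cat_alpha_p q K y in let as_ := cat_alpha_s q K T x y in
  let bp := cat_beta_p q L x in let bs := cat_beta_s q T x y in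
  [/\ size ap = K, size as_ = T, size bp = L, size bs = T
    & all (fun a => a < q) (ap ++ as_ ++ bp ++ bs)].
Proof.
move=> q_gt0 /=; rewrite !size_map !size_iota; split => //.
by apply/allP => z; rewrite !mem_cat => /or4P[] /mapP[i _ ->]; rewrite ltn_pmod.
Qed.

Section CATxDegrees.
Variables K L T ka la x y : nat.
Hypotheses (T_le_L : T <= L) (L_le_K : L <= K).
Hypotheses (ka_lt : ka < T - 1) (la_lt : la < T - 1).
Hypotheses (Ks_coprime : coprime (K + 1 + ka) (T - 1)) (Ls_coprime : coprime (L + 1 + la) (T - 1)).
Hypothesis x_coprime : coprime x (CATq K L T ka la).
Hypothesis q_dvd_xt_yKs : (x * (T - 1) + y * Kstar K ka) %% CATq K L T ka la = 0.

Local Notation q := (CATq K L T ka la).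
Local Notation Ks := (K + 1 + ka).
Local Notation Ls := (L + 1 + la).
Local Notation t := (T - 1).
Local Notation ap := (cat_alpha_p q K y).
Local Notation as_ := (cat_alpha_s q K T x y).
Local Notation bp := (cat_beta_p q L x).
Local Notation bs := (cat_beta_s q T x y).

Definition regionTL := rect 0 K 1 L.
Definition regionR :=
  rect (t - ka) (K - (t - ka)) 0 1 ++ rect K 1 T (Ls - T) ++ rect K T 0 T.
Definition regions := regionTL ++ regionR.

Definition lattice_step (P P' : nat * nat) :=
  (P'.1 = P.1 + Ks /\ P'.2 = P.2 + t) \/ (P'.1 + t = P.1 /\ P'.2 = P.2 + Ls).

Lemma mem_regionTL P : (P \in regionTL) = (P.1 < K) && (0 < P.2 <= L).
Proof. by rewrite mem_rect; case: P => a b /=; lia. Qed.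

Lemma mem_regionR P : (P \in regionR) =
  [|| (t - ka <= P.1 < K) && (P.2 == 0), (P.1 == K) && (T <= P.2 < Ls)
    | (K <= P.1 < K + T) && (P.2 < T)].
Proof. by rewrite !mem_cat !mem_rect; case: P => a b /=; lia. Qed.

Lemma mem_regions P : (P \in regions) = (P \in regionTL) || (P \in regionR).
Proof. exact: mem_cat. Qed.

Lemma regionTL_regionR P : P \in regionTL -> P \notin regionR.
Proof. by rewrite mem_regionTL mem_regionR; case: P => a b /=; lia. Qed.

Lemma uniq_regions : uniq regions.
Proof.
rewrite /regions cat_uniq uniq_rect; apply/and3P; split=> //.
  by apply/hasPn => P; apply: contraL; apply: regionTL_regionR.
rewrite /regionR !cat_uniq !uniq_rect andbT /=.
by apply/andP; split; apply/hasPn => P; rewrite ?mem_cat !mem_rect; case: P => a b /=; lia.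
Qed.

Lemma size_regions : size regions = (K + 1) * (L + 1) + t ^ 2 + ka + la.
Proof. by rewrite !size_cat !size_rect; nia. Qed.

Lemma regions_box P : P \in regions -> P.1 <= K + T - 1 /\ P.2 <= L + la.
Proof. by rewrite mem_regions mem_regionTL mem_regionR; case: P => a b /=; lia. Qed.

Lemma regions_no_step P P' : P \in regions -> P' \in regions -> ~ lattice_step P P'.
Proof.
rewrite !mem_regions !mem_regionTL !mem_regionR /lattice_step.
by case: P => a b; case: P' => a' b' /=; lia.
Qed.

Lemma q_gt0 : 0 < q.
Proof. by rewrite /CATq /Kstar /Lstar ltn_addr // muln_gt0 !(addnAC _ 1) !addn1. Qed.

Lemma Ks_coprime_q : coprime Ks q.
Proof. by rewrite /CATq mulnC coprime_mulD_sqr. Qed.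

Lemma Ls_coprime_q : coprime Ls q.
Proof. exact: coprime_mulD_sqr. Qed.

Let qZE : (q%:Z = Ks%:Z * Ls%:Z + t%:Z ^+ 2)%R.
Proof. by rewrite /CATq /Kstar /Lstar -mulnn PoszD !PoszM expr2. Qed.

Let q_neq0 : (q%:Z != 0)%R.
Proof. by rewrite eqz_nat -lt0n q_gt0. Qed.

Let q_coprimez_x : coprimez q x.
Proof. by rewrite coprimezE !absz_nat coprime_sym. Qed.

Let q_coprimez_Ks : coprimez q Ks.
Proof. by rewrite coprimezE !absz_nat coprime_sym Ks_coprime_q. Qed.

Let q_dvdz_xt_yKs : (q%:Z %| (x%:Z * t%:Z + y%:Z * Ks%:Z)%R)%Z.
Proof. by rewrite -!PoszM -PoszD dvdzE !absz_nat; apply/eqP. Qed.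

Lemma yt_eq_xLs_mod : y * t = x * Ls %[mod q].
Proof.
apply/eqP; rewrite -eqz_nat -!modz_nat eqz_mod_dvd !PoszM.
exact: lattice_dvd_yt qZE q_coprimez_Ks q_dvdz_xt_yKs.
Qed.

Lemma y_coprime_q : coprime y q.
Proof.
have : coprime (x * Ls) q by rewrite coprimeMl x_coprime Ls_coprime_q.
by rewrite -coprime_modl -yt_eq_xLs_mod coprime_modl coprimeMl => /andP[].
Qed.

(* The pair (a, b) stands for a y + (b - 1) x; the offset keeps b natural. *)
Definition deg (P : nat * nat) := (P.1 * y + P.2 * x + (q - x %% q)) %% q.

Lemma deg_eqE P P' :
  (deg P == deg P') = (q%:Z %| ((P.1%:Z - P'.1%:Z) * y%:Z + (P.2%:Z - P'.2%:Z) * x%:Z)%R)%Z.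
Proof.
rewrite /deg eqn_modDr -eqz_nat -!modz_nat eqz_mod_dvd.
by congr (_ \in dvdz _); lia.
Qed.

Lemma degS a b : deg (a, b.+1) = (a * y + b * x) %% q.
Proof.
rewrite /deg /= (_ : _ + _ = (x %/ q).+1 * q + (a * y + b * x)) ?modnMDl //.
have := divn_eq x q; have := ltn_pmod x q_gt0; nia.
Qed.

Lemma deg_Ks_t a b : deg (a + Ks, b + t) = deg (a, b).
Proof. by apply/eqP; rewrite deg_eqE /= (_ : _ + _ = x%:Z * t%:Z + y%:Z * Ks%:Z)%R //; lia. Qed.

Lemma deg_t_Ls a b : deg (a + t, b) = deg (a, b + Ls).
Proof.
apply/eqP; rewrite deg_eqE /= (_ : _ + _ = y%:Z * t%:Z - x%:Z * Ls%:Z)%R; last by lia.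
exact: lattice_dvd_yt qZE q_coprimez_Ks q_dvdz_xt_yKs.
Qed.

Lemma deg_eq_box P P' :
  P.1 <= K + T - 1 -> P'.1 <= K + T - 1 -> P.2 <= L + la -> P'.2 <= L + la ->
  deg P = deg P' -> [\/ P = P', lattice_step P P' | lattice_step P' P].
Proof.
case: P P' => a b [a' b'] /= a_le a'_le b_le b'_le /eqP; rewrite deg_eqE /=.
case/(lattice_coords qZE q_neq0 q_coprimez_x q_coprimez_Ks q_dvdz_xt_yKs) => m [n [Da Db]].
have da_bound : (- (K + T - 1)%:Z <= m * Ks - n * t <= (K + T - 1)%:Z)%R by rewrite -Da; lia.
have db_bound : (- (L + la)%:Z <= m * t + n * Ls <= (L + la)%:Z)%R by rewrite -Db; lia.
have t_ge0 : (0 <= t%:Z)%R by [].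
have Ba_lt1 : ((K + T - 1)%:Z < Ks%:Z + t%:Z)%R by lia.
have Ba_lt2 : ((K + T - 1)%:Z < 2 * Ks%:Z)%R by lia.
have Bb_lt1 : ((L + la)%:Z < Ls%:Z + t%:Z)%R by lia.
have Bb_lt2 : ((L + la)%:Z < 2 * Ls%:Z)%R by lia.
case: (lattice_short_vectors t_ge0 Ba_lt1 Ba_lt2 Bb_lt1 Bb_lt2 da_bound db_bound)
  => [[-> ->]|[[-> ->]|[[-> ->]|[[-> ->]|[-> ->]]]]] in Da Db;
  [apply: Or31; congr pair | apply: Or33 | apply: Or32 | apply: Or33 | apply: Or32];
  rewrite /lattice_step /=; lia.
Qed.

Lemma deg_inj : {in regions &, injective deg}.
Proof.
move=> P P' P_in P'_in eq_deg.
have [P1_le P2_le] := regions_box P_in.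
have [P'1_le P'2_le] := regions_box P'_in.
case: (deg_eq_box P1_le P'1_le P2_le P'2_le eq_deg) => // step.
  by case: (regions_no_step P_in P'_in).
by case: (regions_no_step P'_in P_in).
Qed.

Lemma mem_TLset z : (z \in TLset q ap as_ bp bs) = (z \in map deg regionTL).
Proof.
apply/sumset_mapP/mapP => [[i + [k +]]|[[a b] +]] ->.
- rewrite !mem_iota modnDm -degS => i_lt k_lt; exists (i, k.+1) => //.
  by rewrite mem_regionTL /=; lia.
- rewrite mem_regionTL /= => /andP[a_lt /andP[b_gt0 b_le]].
  exists a; first by rewrite mem_iota.
  exists b.-1; first by rewrite mem_iota; lia.
  by rewrite modnDm -degS prednK.
Qed.

Lemma TRset_sub z : z \in TRset q ap as_ bp bs -> z \in map deg regionR.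
Proof.
case/sumset_mapP => i; rewrite mem_iota => i_lt [j]; rewrite mem_iota => j_lt ->.
have -> : ((i * y) %% q + (j * y + (q - x %% q)) %% q) %% q = deg (i + j, 0).
  by rewrite modnDm /deg /=; congr (_ %% q); ring.
have [le_ij|lt_ij] := leqP (t - ka) (i + j).
  by apply: map_f; rewrite mem_regionR /=; lia.
by rewrite -deg_Ks_t; apply: map_f; rewrite mem_regionR /=; lia.
Qed.

Lemma BLset_sub z : z \in BLset q ap as_ bp bs -> z \in map deg regionR.
Proof.
case/sumset_mapP => i; rewrite mem_iota => i_lt [k]; rewrite mem_iota => k_lt ->.
have -> : ((K * y + i * x) %% q + (k * x) %% q) %% q = deg (K, (i + k).+1).
  by rewrite modnDm degS mulnDl addnA.
have [le_Ls|lt_Ls] := leqP Ls (i + k).+1.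
  rewrite -(subnK le_Ls) -deg_t_Ls; apply: map_f; rewrite mem_regionR /=; lia.
by apply: map_f; rewrite mem_regionR /=; lia.
Qed.

Lemma BRset_sub z : z \in BRset q ap as_ bp bs -> z \in map deg regionR.
Proof.
case/sumset_mapP => i; rewrite mem_iota => i_lt [j]; rewrite mem_iota => j_lt ->.
have -> : ((K * y + i * x) %% q + (j * y + (q - x %% q)) %% q) %% q = deg (K + j, i).
  by rewrite modnDm /deg /=; congr (_ %% q); ring.
by apply: map_f; rewrite mem_regionR /=; lia.
Qed.

Lemma regionR_sub z : z \in map deg regionR ->
  z \in TRset q ap as_ bp bs ++ BLset q ap as_ bp bs ++ BRset q ap as_ bp bs.
Proof.
case/mapP => -[a b]; rewrite mem_regionR /= !mem_cat => /or3P[] /andP[a_in b_in] ->.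
- rewrite (eqP b_in) -(addn0 a); apply/orP; left; apply/sumset_mapP.
  exists a; first by rewrite mem_iota; lia.
  exists 0; first by rewrite mem_iota; lia.
  by rewrite modnDm /deg /=; congr (_ %% q); ring.
- rewrite (eqP a_in); apply/orP; right; apply/orP; left; apply/sumset_mapP.
  exists t; first by rewrite mem_iota; lia.
  exists (b - T); first by rewrite mem_iota; lia.
  by rewrite modnDm -addnA -mulnDl -degS; congr (deg (K, _)); lia.
- apply/orP; right; apply/orP; right; apply/sumset_mapP.
  exists b; first by rewrite mem_iota; lia.
  exists (a - K); first by rewrite mem_iota; lia.
  have a_eq : a = K + (a - K) by lia.
  by rewrite modnDm {1}a_eq /deg /=; congr (_ %% q); ring.
Qed.

Lemma mem_unionset z : (z \in unionset q ap as_ bp bs) = (z \in map deg regions).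
Proof.
rewrite /unionset mem_undup map_cat !mem_cat -mem_TLset.
apply/idP/idP => /orP[-> //|]; rewrite ?orbT //.
  by move=> /or3P[/TRset_sub|/BLset_sub|/BRset_sub] ->; rewrite orbT.
by move/regionR_sub; rewrite !mem_cat => ->; rewrite orbT.
Qed.

Lemma size_unionset :
  size (unionset q ap as_ bp bs) = (K + 1) * (L + 1) + t ^ 2 + ka + la.
Proof.
rewrite -size_regions -(size_map deg).
apply/perm_size/uniq_perm; first exact: undup_uniq.
  by rewrite (map_inj_in_uniq deg_inj) uniq_regions.
exact: mem_unionset.
Qed.

Lemma size_TLset : size (TLset q ap as_ bp bs) = K * L.
Proof.
rewrite -[K * L](size_rect 0 K 1 L) -/(regionTL) -(size_map deg).
apply/perm_size/uniq_perm; first exact: undup_uniq.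
  rewrite (map_inj_in_uniq (sub_in2 _ deg_inj)) ?uniq_rect // => P P_in.
  by rewrite mem_regions P_in.
exact: mem_TLset.
Qed.

Lemma TLset_disjoint : [&& disjointl (TLset q ap as_ bp bs) (TRset q ap as_ bp bs),
  disjointl (TLset q ap as_ bp bs) (BLset q ap as_ bp bs) &
  disjointl (TLset q ap as_ bp bs) (BRset q ap as_ bp bs)].
Proof.
suff disj S : {subset S <= map deg regionR} -> disjointl (TLset q ap as_ bp bs) S.
  by apply/and3P; split; apply: disj; [exact: TRset_sub | exact: BLset_sub | exact: BRset_sub].
move=> sub_S; apply/allP => z; rewrite mem_TLset => /mapP[P P_in ->].
apply/negP => /sub_S /mapP[P' P'_in deg_PP'].
have PP' : P = P' by apply: deg_inj; rewrite // mem_regions ?P_in ?P'_in ?orbT.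
by move: (regionTL_regionR P_in); rewrite PP' P'_in.
Qed.

End CATxDegrees.

Section RootsOfUnity.
Local Open Scope ring_scope.

Lemma finField_prim_root (F : finFieldType) q :
  (0 < q)%N -> (q %| #|F|.-1)%N -> exists w : F, q.-primitive_root w.
Proof.
move=> q_gt0 dv_q.
pose units := [seq z <- enum F | z != 0].
have card_gt0 : (0 < #|F|.-1)%N by rewrite ltn_predRL finNzRing_gt1.
have /hasP[z _ z_prim] : has (#|F|.-1).-primitive_root units.
  apply: has_prim_root => //.
  - apply/allP => z; rewrite mem_filter unity_rootE => /andP[z_neq0 _].
    by apply/eqP/(mulfI z_neq0); rewrite mulr1 -exprS prednK ?expf_card // ltnW ?finNzRing_gt1.
  - exact/filter_uniq/enum_uniq.
  - by rewrite -(cardC1 (0 : F)) cardE /enum_mem /units enumT.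
exists (z ^+ (#|F|.-1 %/ q)); exact: dvdn_prim_root.
Qed.

Lemma det_scaled_Vandermonde_neq0 (F : fieldType) n (c z : 'I_n -> F) :
  (forall i, c i != 0) -> injective z -> \det (\matrix_(i, j) (c i * z i ^+ j)) != 0.
Proof.
move=> c_neq0 z_inj.
have -> : \matrix_(i, j) (c i * z i ^+ j) = diag_mx (\row_i c i) *m (Vandermonde n (\row_i z i))^T.
  by apply/matrixP => i j; rewrite mul_diag_mx !mxE.
rewrite det_mulmx det_diag det_tr det_Vandermonde; apply: mulf_neq0.
  by apply/prodf_neq0 => i _; rewrite mxE.
apply/prodf_neq0 => i _; apply/prodf_neq0 => j lt_ij; rewrite !mxE subr_eq0.
by apply: contraTneq lt_ij => /z_inj ->; rewrite ltnn.
Qed.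

Variables (F : fieldType) (q : nat) (w : F).
Hypothesis w_prim : q.-primitive_root w.

Lemma exists_prim_root_powers_unit_minor N (gam : seq nat) :
  size gam = N -> uniq gam -> all (fun a => a < q)%N gam ->
  exists r : 'I_N -> 'I_q,
    injective r /\ \det (\matrix_(i < N, j < N) (w ^+ r i) ^+ nth 0%N gam j) != 0.
Proof.
move=> size_gam uniq_gam gam_lt.
have gam_ltj (j : 'I_N) : (nth 0%N gam j < q)%N.
  by apply: (allP gam_lt); rewrite mem_nth ?size_gam.
have le_Nq : (N <= q)%N.
  rewrite -size_gam -(size_iota 0 q) uniq_leq_size // => a /(allP gam_lt).
  by rewrite mem_iota.
pose M : 'M[F]_(q, N) := \matrix_(i, j) w ^+ (i * nth 0%N gam j).
have M_full : row_full M.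
  rewrite /row_full eqn_leq rank_leq_col /=.
  have sub_free : row_free (rowsub (widen_ord le_Nq) M).
    rewrite row_free_unit unitmxE unitfE.
    have -> : rowsub (widen_ord le_Nq) M = (\matrix_(i, j) (1 * (w ^+ nth 0%N gam i) ^+ j))^T.
      by apply/matrixP => i j; rewrite !mxE mul1r mulnC exprM.
    rewrite det_tr; apply: det_scaled_Vandermonde_neq0 => [i|i j]; first exact: oner_neq0.
    move/eqP; rewrite (eq_prim_root_expr w_prim) !modn_small // nth_uniq ?size_gam //.
    by move/eqP/ord_inj.
  rewrite -row_leq_rank in sub_free.
  exact: leq_trans sub_free (mxrankS (rowsub_sub _ _)).
exists (fullrankfun M_full); split; first exact: fullrankfun_inj.
have := fullrowsub_unit M_full; rewrite unitmxE unitfE.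
by congr (~~ (\det _ == 0)); apply/matrixP => i j; rewrite !mxE -exprM.
Qed.

Lemma det_prim_root_progression_neq0 n (r : 'I_n -> 'I_q) c d :
  injective r -> coprime d q ->
  \det (\matrix_(i < n, j < n) (w ^+ r i) ^+ ((c + j * d) %% q)) != 0.
Proof.
move=> r_inj d_coprime.
have wd_prim : q.-primitive_root (w ^+ d) by rewrite prim_root_exp_coprime.
have w_neq0 : w != 0 by rewrite (prim_root_eq0 w_prim) -lt0n (prim_order_gt0 w_prim).
have -> : \matrix_(i < n, j < n) (w ^+ r i) ^+ ((c + j * d) %% q) =
          \matrix_(i, j) ((w ^+ r i) ^+ c * ((w ^+ d) ^+ r i) ^+ j).
  apply/matrixP => i j; rewrite !mxE expr_mod; last first.
    by rewrite exprAC (prim_expr_order w_prim) expr1n.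
  by rewrite -!exprM -exprD; congr (w ^+ _); ring.
apply: det_scaled_Vandermonde_neq0 => [i|i j]; first by rewrite !expf_neq0.
move/eqP; rewrite (eq_prim_root_expr wd_prim) !modn_small //.
by move=> /eqP /val_inj /r_inj.
Qed.

Lemma exists_prim_root_evaluation_points N T (gam a_s b_s : seq nat) c d c' d' :
  size gam = N -> uniq gam -> all (fun a => a < q)%N gam -> coprime d q -> coprime d' q ->
  a_s = [seq (c + i * d) %% q | i <- iota 0 T]%N ->
  b_s = [seq (c' + i * d') %% q | i <- iota 0 T]%N ->
  exists rho : 'I_N -> F,
    [/\ forall i, rho i ^+ q = 1, \det (@Vmx _ N N rho gam) != 0,
        forall f : 'I_T -> 'I_N, injective f ->
          \det (\matrix_(i < T, j < T) rho (f i) ^+ nth 0%N a_s j) != 0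
      & forall f : 'I_T -> 'I_N, injective f ->
          \det (\matrix_(i < T, j < T) rho (f i) ^+ nth 0%N b_s j) != 0].
Proof.
move=> size_gam uniq_gam gam_lt d_coprime d'_coprime -> ->.
have [r [r_inj r_det]] := exists_prim_root_powers_unit_minor size_gam uniq_gam gam_lt.
have minor c0 d0 : coprime d0 q -> forall f : 'I_T -> 'I_N, injective f ->
    \det (\matrix_(i < T, j < T)
            (w ^+ r (f i)) ^+ nth 0%N [seq (c0 + i * d0) %% q | i <- iota 0 T]%N j) != 0.
  move=> d0_coprime f f_inj.
  rewrite (_ : \matrix_(i, j) _ = \matrix_(i, j) (w ^+ r (f i)) ^+ ((c0 + j * d0) %% q)).
    exact: det_prim_root_progression_neq0 (inj_comp r_inj f_inj) d0_coprime.
  by apply/matrixP => i j; rewrite !mxE (nth_map 0%N) ?size_iota // nth_iota.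
exists (fun i => w ^+ r i); split; [|exact: r_det|exact: minor|exact: minor].
by move=> i; rewrite exprAC (prim_expr_order w_prim) expr1n.
Qed.

End RootsOfUnity.

Theorem theorem2 (K L T kappa lambda x y : nat) :
  2 <= T -> T <= L -> L <= K ->
  (* kappa, lambda: least non-negative integers making K+1+kappa, L+1+lambda coprime to T-1 *)
  coprime (K + 1 + kappa) (T - 1) ->
  (forall k, k < kappa -> ~~ coprime (K + 1 + k) (T - 1)) ->
  coprime (L + 1 + lambda) (T - 1) ->
  (forall l, l < lambda -> ~~ coprime (L + 1 + l) (T - 1)) ->
  0 < x -> coprime x (CATq K L T kappa lambda) ->
  (* y in {0..q-1} with x*(T-1) + y*K^* = 0 mod q *)
  y < CATq K L T kappa lambda ->
  (x * (T - 1) + y * Kstar K kappa) %% CATq K L T kappa lambda = 0 ->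
  let q := CATq K L T kappa lambda in
  is_CAT q (cat_alpha_p q K y) (cat_alpha_s q K T x y)
           (cat_beta_p q L x) (cat_beta_s q T x y)
         K L T ((K + 1) * (L + 1) + (T - 1) ^ 2 + kappa + lambda).
Proof.
(* Only the residues of x and y modulo q matter. *)
move=> T_ge2 T_le_L L_le_K Ks_coprime kappa_min Ls_coprime lambda_min _ x_coprime _ x_y_rel q.
have t_gt0 : 0 < T - 1 by rewrite subn_gt0.
have kappa_lt := least_coprime_shift_lt t_gt0 kappa_min.
have lambda_lt := least_coprime_shift_lt t_gt0 lambda_min.
have q_pos : 0 < q := q_gt0 K L T kappa lambda.
have y_coprime : coprime y q := y_coprime_q Ks_coprime Ls_coprime x_coprime x_y_rel.
split; first exact: cat_shape.
split; [exact: size_unionset | exact: size_TLset | exact: TLset_disjoint |].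
move=> p p_prime q_dvd_p.
have [w w_prim] : exists w : 'F_p, (q.-primitive_root w)%R.
  by apply: finField_prim_root; rewrite ?card_Fp.
apply: (exists_prim_root_evaluation_points w_prim (c := K * y) (c' := q - x %% q)
  _ _ _ x_coprime y_coprime).
- by rewrite size_sort size_unionset.
- by rewrite sort_uniq undup_uniq.
- by rewrite all_sort unionset_lt.
- by [].
- by apply: eq_map => i; rewrite addnC.
Qed.
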